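(* Let $(V,o)$ be a normal surface singularity with $p_f(V,o)>0$, and let $\pi\colon X\to V$ be the minimal resolution. Assume that the fundamental cycle $Z$ is essentially irreducible, let $A$ be the unique irreducible component of $Z$ that is not a $(-2)$-curve, and assume $K_X\cdot A+Z^2\ge0$ and $D_m=Z_{min}$, where $D_m$ is the smallest term of the Yau sequence for $Z$. Then the canonical cycle is $$Z_K=\Big(\frac{2-2p_f(V,o)}{Z^2}+1\Big)Y,$$ where $Y$ is the Yau cycle.
   Context: Let $\pi^{-1}(o)=\bigcup_{i=1}^nE_i$ be the irreducible components of the exceptional set. A cycle is $D=\sum d_iE_i$, $d_i\in\mathbb Z$; $D_1\le D_2$ is coefficientwise, $D_1<D_2$ means $D_1\le D_2$, $D_1\neq D_2$. $K_X$ is the canonical divisor of $X$; for a cycle $D>0$, $p_a(D)=1+\frac12(D^2+D\cdot K_X)$. The fundamental cycle $Z$ is the smallest cycle $D>0$ with support $\pi^{-1}(o)$ and $D\cdot E_i\le0$ for all $i$; $p_f(V,o)=p_a(Z)$. ''$\mathcal O_D(-C)$ numerically trivial'' means $C\cdot E=0$ for every component $E\le D$. $Z_{min}$ is the unique minimal cycle $0<Z_{min}\le Z$ with $p_a(Z_{min})=p_a(Z)$. Yau sequence: for a cycle $D$ that is the fundamental cycle on its support with $Z_{min}\le D$, $p_a(D)=p_f(V,o)$ and $D\cdot E=0$ for all components $E\le Z_{min}$, its Tyurina component is the unique maximal cycle $0<D'<D$ with $\mathcal O_{D'}(-D)$ numerically trivial and $p_a(D')=p_a(D)$. Set $D_1=Z$,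 $D_{i+1}=$ Tyurina component of $D_i$ as long as $D_i\cdot E=0$ for all components $E\le Z_{min}$, stopping at the first $D_m$ with $D_m\cdot Z_{min}<0$; $Y=\sum_{i=1}^mD_i$ is the Yau cycle. A $(-2)$-curve is a smooth rational exceptional curve $E$ with $E^2=-2$. $Z$ is essentially irreducible if there is a component $A\le Z$ which is not a $(-2)$-curve such that, with $k$ the coefficient of $A$ in $Z$, either $Z=kA$ or all components of $Z-kA$ are $(-2)$-curves. The canonical cycle $Z_K$ is the cycle with rational coefficients supported on $\pi^{-1}(o)$ with $Z_K\cdot E_i=-K_X\cdot E_i$ for all $i$. *)

(* Numerical (intersection-theoretic) model of the minimal
   resolution of a normal surface singularity: exceptional components
   E_0..E_{n-1}, intersection matrix M (M i j = E_i . E_j) and canonical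
   numbers k i = K_X . E_i. *)
From HB Require Import structures.
From mathcomp Require Import all_boot all_order all_algebra.
Set Implicit Arguments. Unset Strict Implicit. Unset Printing Implicit Defensive.
Import Order.TTheory GRing.Theory Num.Theory.
Local Open Scope ring_scope.

Section Defs.
Variable n : nat.

(* cycles D = sum d_i E_i *)
Definition ecycle := {ffun 'I_n -> int}.

Definition Ecomp (i : 'I_n) : ecycle := [ffun j => (j == i)%:R].

Definition ip (M : 'M[int]_n) (D1 D2 : ecycle) : int :=
  \sum_(i < n) \sum_(j < n) D1 i * M i j * D2 j.

Definition Kdot (k : 'I_n -> int) (D : ecycle) : int := \sum_(i < n) D i * k i.

Definition pa (M : 'M[int]_n) (k : 'I_n -> int) (D : ecycle) : rat :=
  1 + ((ip M D D + Kdot k D)%:~R) / 2.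

Definition cle (D1 D2 : ecycle) : Prop := forall i, D1 i <= D2 i.
Definition clt (D1 D2 : ecycle) : Prop := cle D1 D2 /\ D1 <> D2.
Definition cpos (D : ecycle) : Prop := clt 0 D.

Definition comp_le (j : 'I_n) (D : ecycle) : Prop := 1 <= D j.

(* O_D(-C) numerically trivial: C . E = 0 for every component E <= D *)
Definition num_trivial (M : 'M[int]_n) (D C : ecycle) : Prop :=
  forall j, comp_le j D -> ip M C (Ecomp j) = 0.

(* Data of a minimal resolution of a normal surface singularity:
   symmetric, nonnegative off the diagonal, negative definite, connected dual
   graph, adjunction parity K.E + E^2 = 2 p_a(E) - 2 with p_a(E) >= 0, and
   minimality (no (-1)-curves), i.e. K_X . E_i >= 0 for all i. *)
Definition min_res_data (M : 'M[int]_n) (k : 'I_n -> int) : Prop :=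
  [/\ M^T = M,
      (forall i j, i != j -> 0 <= M i j),
      (forall D : ecycle, D != 0 -> ip M D D < 0),
      (forall i j, connect (fun a b => M a b != 0) i j)
    & (forall i, [/\ (2 %| k i + M i i)%Z, -2 <= k i + M i i & 0 <= k i])].

Definition is_fundamental_cycle (M : 'M[int]_n) (Z : ecycle) : Prop :=
  [/\ cpos Z, (forall i, Z i != 0), (forall i, ip M Z (Ecomp i) <= 0)
    & (forall D, cpos D -> (forall i, D i != 0) ->
         (forall i, ip M D (Ecomp i) <= 0) -> cle Z D)].

Definition is_Zmin M k (Z Zm : ecycle) : Prop :=
  [/\ cpos Zm, cle Zm Z, pa M k Zm = pa M k Z
    & (forall D, cpos D -> cle D Z -> pa M k D = pa M k Z -> cle Zm D)].

Definition tyurina_cand M k (D D' : ecycle) : Prop :=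
  [/\ cpos D', clt D' D, num_trivial M D' D & pa M k D' = pa M k D].
Definition is_tyurina M k (D D' : ecycle) : Prop :=
  tyurina_cand M k D D' /\ (forall D'', tyurina_cand M k D D'' -> cle D'' D').

Definition is_yau_sequence M k (Z Zm : ecycle) (Ds : seq ecycle) : Prop :=
  [/\ Ds <> [::], nth 0 Ds 0 = Z,
      (forall i : nat, (i.+1 < size Ds)%N ->
         num_trivial M Zm (nth 0 Ds i) /\
         is_tyurina M k (nth 0 Ds i) (nth 0 Ds i.+1))
    & ip M (last 0 Ds) Zm < 0].

Definition yau_cycle (Ds : seq ecycle) : ecycle := \sum_(D <- Ds) D.

(* (-2)-curve: smooth rational with E^2 = -2; numerically E^2 = -2 and
   K.E = 0 (equivalently p_a(E) = 0, i.e. E smooth rational). *)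
Definition minus2 (M : 'M[int]_n) (k : 'I_n -> int) (i : 'I_n) : bool :=
  (M i i == -2) && (k i == 0).

Definition essentially_irreducible M k (Z : ecycle) : Prop :=
  exists A : 'I_n, [/\ comp_le A Z, ~~ minus2 M k A &
    (Z = [ffun j => Z A * Ecomp A j] \/
     forall j, (Z - [ffun j => Z A * Ecomp A j]) j != 0 -> minus2 M k j)].

Definition is_canonical_cycle (M : 'M[int]_n) (k : 'I_n -> int)
  (ZK : 'I_n -> rat) : Prop :=
  forall i, \sum_(j < n) ZK j * (M j i)%:~R = - (k i)%:~R.

End Defs.

(* Off [A] all curves are (-2)-curves, so [K_X] is numerically
   concentrated on [A] and a cycle [cY] is canonical as soon as [Y.E = 0] for
   [E <> A] and [c Y.A = -K.A]; by negative definiteness the canonical cycle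
   is unique.  Laufer's algorithm shows [p_a(D) <= p_a(Z)] for [0 < D <= Z].
   Every term [D_i] of the Yau sequence has [p_a(D_i) = p_a(Z)], and then
   [K.A + Z^2 >= 0] forces [D_i] to have the [A]-coefficient of [Z] and
   [D_i^2 = Z^2].  The [D_i] are pairwise orthogonal, and a descending
   induction, driven by the maximality of Tyurina components and the
   minimality of [Z_min], shows that each tail [D_j + ... + D_m] is orthogonal
   to the curves [E <> A] of [D_j].  For [j = 1] this gives [Y.E = 0] for
   [E <> A], while [Y.A = Z_min.A] and [Z_A (Z_min.A) = Z^2] fix [c]. *)

From mathcomp Require Import all_boot all_order all_algebra.
From mathcomp Require Import ring zify.
Set Implicit Arguments. Unset Strict Implicit. Unset Printing Implicit Defensive.
Import Order.TTheory GRing.Theory Num.Theory.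
Local Open Scope ring_scope.

Section Cycles.
Variable n : nat.
Implicit Types (D B : ecycle n) (i j : 'I_n).

Lemma cle0_ge0 D : cle 0 D -> forall i, 0 <= D i.
Proof. by move=> D_ge0 i; have := D_ge0 i; rewrite ffunE. Qed.

Lemma cpos_ge0 D : cpos D -> forall i, 0 <= D i.
Proof. by case=> /cle0_ge0. Qed.

Lemma cpos_neq0 D : cpos D -> D != 0.
Proof. by case=> _ D_neq0; apply/eqP=> D0; apply: D_neq0. Qed.

Lemma cle_subr_ge0 D B : cle D B -> cle 0 (B - D).
Proof. by move=> DB i; rewrite !ffunE subr_ge0. Qed.

Lemma cpos_addEcomp D j : cle 0 D -> cpos (D + Ecomp j).
Proof.
move=> /cle0_ge0 D_ge0; split=> [i|DE0].
  by rewrite !ffunE addr_ge0.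
have := congr1 (fun C : ecycle n => C j) DE0.
by rewrite !ffunE eqxx /=; have := D_ge0 j; lia.
Qed.

Lemma cle_addEcomp D B j : cle D B -> D j < B j -> cle (D + Ecomp j) B.
Proof.
move=> DB ltj i; rewrite !ffunE.
by have [->|] := eqVneq i j; [rewrite lezD1 | rewrite addr0 => _; apply: DB].
Qed.

Lemma cpos_subEcomp D i j : cle 0 D -> comp_le j D -> i != j -> comp_le i D ->
  cpos (D - Ecomp j).
Proof.
move=> /cle0_ge0 D_ge0 Dj ij Di; split=> [l|DE0].
  by rewrite !ffunE; have [->|] := eqVneq l j; rewrite ?subr_ge0 ?subr0 ?D_ge0.
have := congr1 (fun C : ecycle n => C i) DE0.
by rewrite !ffunE (negbTE ij) subr0 => Di0; move: Di; rewrite /comp_le -Di0.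
Qed.

Lemma cle0_supp D i : cle 0 D -> D i = 0 \/ comp_le i D.
Proof. by move=> /cle0_ge0/(_ i); rewrite /comp_le; lia. Qed.

Lemma sum_Ecomp (F : 'I_n -> int) j : \sum_i Ecomp j i * F i = F j.
Proof.
rewrite (bigD1 j) //= ffunE eqxx mul1r big1 ?addr0 // => i /negbTE ij.
by rewrite ffunE ij mul0r.
Qed.

End Cycles.

Section IntersectionForm.
Variables (n : nat) (M : 'M[int]_n) (k : 'I_n -> int).
Implicit Types (D X : ecycle n) (i j : 'I_n).

Definition dotc D j : int := \sum_i D i * M i j.

(* [qa D = 2 p_a(D) - 2], an integer unlike [pa D]. *)
Definition qa D : int := ip M D D + Kdot k D.

Lemma ip_dotc D X : ip M D X = \sum_j X j * dotc D j.
Proof.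
rewrite /ip exchange_big; apply: eq_bigr => j _.
by rewrite mulr_sumr; apply: eq_bigr => i _; rewrite mulrC.
Qed.

Lemma ip_Ecomp D j : ip M D (Ecomp j) = dotc D j.
Proof. by rewrite ip_dotc sum_Ecomp. Qed.

Lemma dotc_Ecomp i j : dotc (Ecomp i) j = M i j.
Proof. exact: sum_Ecomp. Qed.

Lemma Kdot_Ecomp j : Kdot k (Ecomp j) = k j.
Proof. exact: sum_Ecomp. Qed.

Lemma dotc0 j : dotc 0 j = 0.
Proof. by rewrite /dotc big1 // => i _; rewrite ffunE mul0r. Qed.

Lemma dotcD D1 D2 j : dotc (D1 + D2) j = dotc D1 j + dotc D2 j.
Proof. by rewrite /dotc -big_split; apply: eq_bigr => i _; rewrite ffunE mulrDl. Qed.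

Lemma dotcB D1 D2 j : dotc (D1 - D2) j = dotc D1 j - dotc D2 j.
Proof. by rewrite /dotc -sumrB; apply: eq_bigr => i _; rewrite !ffunE mulrBl. Qed.

Lemma dotc_sum (I : Type) (r : seq I) (P : pred I) (F : I -> ecycle n) j :
  dotc (\sum_(i <- r | P i) F i) j = \sum_(i <- r | P i) dotc (F i) j.
Proof. exact: (big_morph (dotc^~ j) (fun D1 D2 => dotcD D1 D2 j) (dotc0 j)). Qed.

Lemma ipDl D1 D2 X : ip M (D1 + D2) X = ip M D1 X + ip M D2 X.
Proof. by rewrite !ip_dotc -big_split; apply: eq_bigr => j _; rewrite dotcD mulrDr. Qed.

Lemma ipDr D X1 X2 : ip M D (X1 + X2) = ip M D X1 + ip M D X2.
Proof. by rewrite !ip_dotc -big_split; apply: eq_bigr => j _; rewrite ffunE mulrDl. Qed.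

Lemma ipBr D X1 X2 : ip M D (X1 - X2) = ip M D X1 - ip M D X2.
Proof. by rewrite !ip_dotc -sumrB; apply: eq_bigr => j _; rewrite !ffunE mulrBl. Qed.

Lemma ip_suml (I : Type) (r : seq I) (P : pred I) (F : I -> ecycle n) X :
  ip M (\sum_(i <- r | P i) F i) X = \sum_(i <- r | P i) ip M (F i) X.
Proof.
have ip0l : ip M 0 X = 0 by rewrite ip_dotc big1 // => j _; rewrite dotc0 mulr0.
exact: (big_morph (ip M ^~ X) (fun D1 D2 => ipDl D1 D2 X) ip0l).
Qed.

Lemma intr_dotc (R : pzRingType) D j :
  (dotc D j)%:~R = \sum_i (D i)%:~R * (M i j)%:~R :> R.
Proof. by rewrite rmorph_sum; apply: eq_bigr => i _; rewrite rmorphM. Qed.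

Lemma num_trivial_ip C D X : cle 0 X -> cle X C -> num_trivial M C D -> ip M D X = 0.
Proof.
move=> X_ge0 XC Dtriv; rewrite ip_dotc big1 // => j _.
have [->|Xj] := cle0_supp j X_ge0; first by rewrite mul0r.
by rewrite -ip_Ecomp Dtriv ?mulr0 //; apply: le_trans Xj (XC j).
Qed.

Lemma KdotD D1 D2 : Kdot k (D1 + D2) = Kdot k D1 + Kdot k D2.
Proof. by rewrite /Kdot -big_split; apply: eq_bigr => i _; rewrite ffunE mulrDl. Qed.

Lemma pa_eq D1 D2 : pa M k D1 = pa M k D2 <-> qa D1 = qa D2.
Proof.
rewrite /pa -/(qa D1) -/(qa D2); split=> [|->] //.
by move/addrI/(congr1 ( *%R^~ 2)); rewrite !divfK // => /intr_inj.
Qed.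

Hypothesis Msym : M^T = M.

Lemma Msym_entry i j : M i j = M j i.
Proof. by rewrite -{1}Msym mxE. Qed.

Lemma ip_sym D X : ip M D X = ip M X D.
Proof.
rewrite /ip exchange_big; apply: eq_bigr => j _; apply: eq_bigr => i _.
by rewrite Msym_entry; ring.
Qed.

Lemma qaDE D j : qa (D + Ecomp j) = qa D + 2 * dotc D j + M j j + k j.
Proof.
rewrite /qa ipDl !ipDr KdotD Kdot_Ecomp (ip_sym (Ecomp j)) !ip_Ecomp dotc_Ecomp.
ring.
Qed.

Lemma qaBE D j : qa (D - Ecomp j) = qa D - 2 * dotc D j + M j j - k j.
Proof. by have := qaDE (D - Ecomp j) j; rewrite subrK dotcB dotc_Ecomp; lia. Qed.

Hypothesis Mneg : forall D, D != 0 -> ip M D D < 0.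

Lemma num_trivial_self D : cpos D -> ~ num_trivial M D D.
Proof.
move=> posD Dtriv; have := Mneg (cpos_neq0 posD).
by rewrite (num_trivial_ip (proj1 posD) _ Dtriv) ?ltxx.
Qed.

(* Clear denominators: [V] times the product [P] of its denominators is an
   integral cycle orthogonal to everything, hence zero. *)
Lemma negdef_left_kernel (V : 'I_n -> rat) :
  (forall j, \sum_i V i * (M i j)%:~R = 0) -> forall i, V i = 0.
Proof.
move=> VM0.
pose P : rat := \prod_l (denq (V l))%:~R.
have P_neq0 : P != 0 by apply/prodf_neq0 => l _; rewrite intr_eq0 denq_neq0.
pose D : ecycle n := [ffun j => numq (V j) * \prod_(l | l != j) denq (V l)].
have DE j : (D j)%:~R = V j * P.
  by rewrite ffunE intrM rmorph_prod numqE /P [in RHS](bigD1 j) //= mulrA.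
have dotcD0 j : dotc D j = 0.
  apply/eqP; rewrite -(intr_eq0 rat) intr_dotc.
  under eq_bigr => i _ do rewrite DE mulrAC.
  by rewrite -mulr_suml VM0 mul0r.
have D0 : D = 0.
  apply/eqP; apply: contraT => /Mneg.
  by rewrite ip_dotc big1 ?ltxx // => j _; rewrite dotcD0 mulr0.
move=> i; have := DE i; rewrite D0 ffunE => /esym/eqP.
by rewrite mulf_eq0 (negbTE P_neq0) orbF => /eqP.
Qed.

Lemma canonical_cycle_unique ZK ZK' :
  is_canonical_cycle M k ZK -> is_canonical_cycle M k ZK' -> ZK =1 ZK'.
Proof.
move=> canZK canZK' i; apply/eqP; rewrite -subr_eq0; apply/eqP.
apply: (negdef_left_kernel (V := fun j => ZK j - ZK' j)) => j.
under eq_bigr => l _ do rewrite mulrBl.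
by rewrite sumrB canZK canZK' subrr.
Qed.

End IntersectionForm.

Section FundamentalCycle.
Variables (n : nat) (M : 'M[int]_n) (k : 'I_n -> int) (Z : ecycle n).
Hypothesis Msym : M^T = M.
Hypothesis Moff : forall i j, i != j -> 0 <= M i j.
Hypothesis Mneg : forall D : ecycle n, D != 0 -> ip M D D < 0.
Hypothesis Mconn : forall i j, connect (fun a b => M a b != 0) i j.
Hypothesis adj_ge : forall i, -2 <= k i + M i i.
Hypothesis HZ : is_fundamental_cycle M Z.
Implicit Types (D T : ecycle n) (i j : 'I_n).
Local Notation dotc := (dotc M).
Local Notation qa := (qa M k).

Lemma dotc_ge0_off_support D j : cle 0 D -> D j = 0 -> 0 <= dotc D j.
Proof.
move=> /cle0_ge0 D_ge0 Dj0; apply: sumr_ge0 => i _.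
by have [->|/Moff Mij] := eqVneq i j; rewrite ?Dj0 ?mul0r ?mulr_ge0.
Qed.

Lemma antinef_support_closed D a b :
  cle 0 D -> dotc D a <= 0 -> M a b != 0 -> D a = 0 -> D b = 0.
Proof.
move=> D_ge0 Da_le0 Mab Da0.
have terms_ge0 i : true -> 0 <= D i * M i a.
  by have [->|/Moff Mia] := eqVneq i a; rewrite ?Da0 ?mul0r ?mulr_ge0 ?cle0_ge0.
have Da_eq0 : dotc D a = 0 by apply/eqP; rewrite eq_le Da_le0 dotc_ge0_off_support.
have /eqP := psumr_eq0P terms_ge0 Da_eq0 (i := b) isT.
by rewrite mulf_eq0 (Msym_entry Msym) (negbTE Mab) orbF => /eqP.
Qed.

Lemma antinef_full_support D :
  cle 0 D -> D != 0 -> (forall j, dotc D j <= 0) -> forall i, D i != 0.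
Proof.
move=> D_ge0 D_neq0 antinef i; apply/negP => /eqP Di0.
have [j Dj] : exists j, D j != 0.
  apply/existsP; apply: contraNT D_neq0 => /existsPn D0.
  by apply/eqP/ffunP => j; rewrite ffunE; apply/eqP/negPn/D0.
move: Dj; have /connectP[p + ->] := Mconn i j.
elim: p i Di0 => [|x p IH] i Di0 /=; first by rewrite Di0 eqxx.
by case/andP=> Mix; apply: IH; apply: antinef_support_closed Mix Di0.
Qed.

Lemma fundamental_antinef j : dotc Z j <= 0.
Proof. by case: HZ => _ _ Znef _; rewrite -ip_Ecomp. Qed.

Lemma fundamental_ge1 i : 1 <= Z i.
Proof.
by case: HZ => posZ Z_neq0 _ _; have := cpos_ge0 posZ i; have := Z_neq0 i; lia.
Qed.

Lemma fundamental_le_antinef D : cpos D -> (forall j, dotc D j <= 0) -> cle Z D.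
Proof.
move=> posD antinef; case: HZ => _ _ _; apply=> // [|j]; last by rewrite ip_Ecomp.
exact: antinef_full_support (proj1 posD) (cpos_neq0 posD) antinef.
Qed.

(* A step of Laufer's algorithm; [qa] does not drop as [E_j^2 + K.E_j >= -2]. *)
Lemma laufer_step D j :
  cle D Z -> 0 < dotc D j -> D j < Z j /\ qa D <= qa (D + Ecomp j).
Proof.
move=> DZ Dj_pos; split; last by rewrite qaDE //; have := adj_ge j; lia.
rewrite lt_neqAle DZ andbT; apply/eqP => Dj_eq.
have : 0 <= dotc (Z - D) j.
  by apply: dotc_ge0_off_support (cle_subr_ge0 DZ) _; rewrite !ffunE Dj_eq subrr.
by rewrite dotcB; have := fundamental_antinef j; lia.
Qed.

Lemma qa_le_fundamental D : cpos D -> cle D Z -> qa D <= qa Z.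
Proof.
pose gap C := \sum_i (Z i - C i).
move=> posD DZ; have [N] := ubnP `|gap D|%N.
elim: N D posD DZ => // N IH D posD DZ gapN.
have [j Dj_pos|antinef] := pickP (fun j => 0 < dotc D j).
  have [ltj le_qa] := laufer_step DZ Dj_pos.
  apply: le_trans le_qa (IH _ (cpos_addEcomp j (proj1 posD)) (cle_addEcomp DZ ltj) _).
  have gap_ge : Z j - D j <= gap D.
    by rewrite /gap (bigD1 j) //= lerDl sumr_ge0 // => i _; rewrite subr_ge0 DZ.
  have -> : gap (D + Ecomp j) = gap D - 1.
    rewrite /gap -(sum_Ecomp (fun=> 1) j) -sumrB.
    by apply: eq_bigr => i _; rewrite !ffunE mulr1 opprD addrA.
  by move: gapN; lia.
have -> // : D = Z.
apply/ffunP => i; apply/eqP; rewrite eq_le DZ fundamental_le_antinef // => j.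
by rewrite leNgt antinef.
Qed.

Lemma dotc_le1_minus2 D E :
  cpos D -> cle D Z -> qa D = qa Z -> D E < Z E -> M E E = -2 -> k E = 0 ->
  dotc D E <= 1.
Proof.
move=> posD DZ qaD ltE EE kE.
have := qa_le_fundamental (cpos_addEcomp E (proj1 posD)) (cle_addEcomp DZ ltE).
by rewrite qaDE // qaD EE kE; lia.
Qed.

Lemma tyurina_dotc_nonpos D T E :
  cpos D -> cle D Z -> qa D = qa Z -> is_tyurina M k D T ->
  dotc D E = 0 -> dotc T E <= 0.
Proof.
move=> posD DZ qaD [[posT [TD T_neqD] Ttriv /pa_eq qaT] Tmax] DE0.
rewrite leNgt; apply/negP => TE_pos.
have := TD E; rewrite le_eqVlt => /orP[/eqP TE_eq|TE_lt].
  have : 0 <= dotc (D - T) E.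
    by apply: dotc_ge0_off_support (cle_subr_ge0 TD) _; rewrite !ffunE TE_eq subrr.
  by rewrite dotcB DE0; lia.
pose X := T + Ecomp E.
have posX : cpos X := cpos_addEcomp E (proj1 posT).
have XD : cle X D := cle_addEcomp TD TE_lt.
have qaX : qa X = qa D.
  apply/eqP; rewrite eq_le qaD qa_le_fundamental //=; last first.
    by move=> i; apply: le_trans (XD i) (DZ i).
  by rewrite qaDE // qaT qaD; have := adj_ge E; lia.
have Xtriv : num_trivial M X D.
  move=> F; rewrite /comp_le !ffunE; have [->|FE] := eqVneq F E.
    by rewrite ip_Ecomp.
  by rewrite addr0; apply: Ttriv.
have X_neqD : X <> D.
  by move=> XD_eq; apply: (num_trivial_self Mneg posD); rewrite -{1}XD_eq.
have := Tmax X (And4 posX (conj XD X_neqD) Xtriv (proj2 (pa_eq _ _ _ _) qaX)) E.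
by rewrite !ffunE eqxx /= lezD1 ltxx.
Qed.

Lemma Zmin_dotc_ge0 Zm E :
  is_Zmin M k Z Zm -> M E E = -2 -> k E = 0 -> cpos (Zm - Ecomp E) ->
  0 <= dotc Zm E.
Proof.
case=> _ ZmZ /pa_eq qaZm Zm_min EE kE posX; rewrite leNgt; apply/negP => ZmE_neg.
have XZ : cle (Zm - Ecomp E) Z.
  by move=> i; apply: le_trans (ZmZ i); rewrite !ffunE lerBlDr lerDl ler0n.
have qaX : qa (Zm - Ecomp E) = qa Z.
  apply/eqP; rewrite eq_le qa_le_fundamental //=.
  by rewrite qaBE // EE kE qaZm; lia.
have := Zm_min _ posX XZ (proj2 (pa_eq _ _ _ _) qaX) E.
by rewrite !ffunE eqxx /=; lia.
Qed.

End FundamentalCycle.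

Lemma ess_irr_minus2 n (M : 'M[int]_n) (k : 'I_n -> int) (Z : ecycle n)
    (A : 'I_n) :
  essentially_irreducible M k Z -> (forall i, Z i != 0) -> ~~ minus2 M k A ->
  forall j, j != A -> minus2 M k j.
Proof.
move=> [A' [_ _ Zshape]] Z_neq0 nA.
have minus2_off j : j != A' -> minus2 M k j.
  move=> jA'; case: Zshape => [ZA'|]; last first.
    by apply; rewrite !ffunE (negbTE jA') mulr0 subr0.
  by have := Z_neq0 j; rewrite ZA' !ffunE (negbTE jA') mulr0 eqxx.
have -> : A = A' by apply/eqP; apply: contraNT nA; apply: minus2_off.
exact: minus2_off.
Qed.

Section YauSequence.
Variables (n : nat) (M : 'M[int]_n) (k : 'I_n -> int).
Variables (Z Zm : ecycle n) (Ds : seq (ecycle n)) (A : 'I_n).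
Hypothesis Msym : M^T = M.
Hypothesis Moff : forall i j, i != j -> 0 <= M i j.
Hypothesis Mneg : forall D : ecycle n, D != 0 -> ip M D D < 0.
Hypothesis Mconn : forall i j, connect (fun a b => M a b != 0) i j.
Hypothesis adj_ge : forall i, -2 <= k i + M i i.
Hypothesis k_ge0 : forall i, 0 <= k i.
Hypothesis HZ : is_fundamental_cycle M Z.
Hypothesis minus2_off : forall E, E != A -> M E E = -2 /\ k E = 0.
Hypothesis kA_Z2 : 0 <= k A + ip M Z Z.
Hypothesis HZm : is_Zmin M k Z Zm.
Hypothesis HDs : is_yau_sequence M k Z Zm Ds.
Hypothesis Ds_last : last 0 Ds = Zm.
Implicit Types (D : ecycle n) (E F : 'I_n) (i j : nat).
Local Notation dotc := (dotc M).
Local Notation qa := (qa M k).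
Local Notation m := (size Ds).
(* Indexed from [0]: [D_ 0 = Z] and [D_ m.-1 = Zm]. *)
Local Notation D_ i := (@nth (ecycle n) 0 Ds i).

Lemma Kdot_A D : Kdot k D = D A * k A.
Proof.
by rewrite /Kdot (bigD1 A) //= big1 ?addr0 // => E /minus2_off[_ ->]; rewrite mulr0.
Qed.

(* Lowering the coefficient of [A] would raise [D^2] by a multiple of
   [K.A >= -Z^2], making [D^2 >= 0]. *)
Lemma coefA_qa_eq D : cpos D -> cle D Z -> qa D = qa Z ->
  D A = Z A /\ ip M D D = ip M Z Z.
Proof.
move=> posD DZ; rewrite /qa !Kdot_A => qaD.
have DD_lt0 := Mneg (cpos_neq0 posD).
suff DA : D A = Z A by split=> //; move: qaD; rewrite DA; lia.
apply/eqP; rewrite eq_le DZ leNgt /=; apply/negP => ltA.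
have : 0 <= (Z A - D A - 1) * k A by apply: mulr_ge0; [lia | apply: k_ge0].
nia.
Qed.

Lemma yau_nonempty : (0 < m)%N.
Proof. by case: HDs; case: Ds. Qed.

Lemma yau_lt_last : (m.-1 < m)%N.
Proof. by rewrite ltn_predL yau_nonempty. Qed.

Lemma yau_head : D_ 0 = Z.
Proof. by case: HDs. Qed.

Lemma yau_last : D_ m.-1 = Zm.
Proof. by rewrite nth_last Ds_last. Qed.

Lemma yau_step i : (i.+1 < m)%N ->
  num_trivial M Zm (D_ i) /\ is_tyurina M k (D_ i) (D_ i.+1).
Proof. by case: HDs => _ _ steps _; apply: steps. Qed.

Lemma yau_stage i : (i < m)%N -> [/\ cpos (D_ i), cle (D_ i) Z & qa (D_ i) = qa Z].
Proof.
elim: i => [|i IH] lt_im.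
  by rewrite yau_head; case: HZ => posZ _ _ _; split=> // E.
have [posD DZ qaD] := IH (ltnW lt_im).
have [_ [[posT [TD _] _ /pa_eq qaT] _]] := yau_step lt_im.
by split=> // [E|]; [apply: le_trans (TD E) (DZ E) | rewrite qaT].
Qed.

Lemma yau_ge0 i : cle 0 (D_ i).
Proof.
have [/yau_stage[[]] //|le_mi] := ltnP i m.
by rewrite nth_default // => E.
Qed.

Lemma yau_le i j : (i <= j)%N -> cle (D_ j) (D_ i).
Proof.
apply: (@homo_leq _ (nth 0 Ds) (fun C C' => cle C' C)).
- by move=> C E.
- by move=> C C' C'' C'C C''C' E; apply: le_trans (C''C' E) (C'C E).
move=> {}i; have [/yau_step[_ [[_ [] //]]]|le_mi1] := ltnP i.+1 m.
by rewrite [D_ i.+1]nth_default //; apply: yau_ge0.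
Qed.

Lemma yau_orth i j : (i < m)%N -> (j < m)%N -> i != j -> ip M (D_ i) (D_ j) = 0.
Proof.
wlog lt_ij : i j / (i < j)%N.
  move=> wlog lt_im lt_jm; rewrite neq_ltn => /orP[lt_ij|lt_ji].
    by apply: wlog => //; rewrite ltn_eqF.
  by rewrite ip_sym //; apply: wlog => //; rewrite ltn_eqF.
move=> _ lt_jm _; have [_ [[_ _ Dtriv _] _]] := yau_step (leq_ltn_trans lt_ij lt_jm).
exact: num_trivial_ip (yau_ge0 j) (yau_le lt_ij) Dtriv.
Qed.

Lemma yau_coefA i : (i < m)%N -> D_ i A = Z A /\ ip M (D_ i) (D_ i) = ip M Z Z.
Proof. by case/yau_stage; apply: coefA_qa_eq. Qed.

Lemma Zm_coefA : Zm A = Z A.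
Proof. by rewrite -yau_last; case: (yau_coefA yau_lt_last). Qed.

Lemma yau_dotcA i : (i.+1 < m)%N -> dotc (D_ i) A = 0.
Proof.
case/yau_step => Ztriv _; rewrite -ip_Ecomp Ztriv // /comp_le Zm_coefA.
exact: fundamental_ge1 HZ A.
Qed.

Lemma yau_tyurina_nonpos i E :
  (i.+1 < m)%N -> dotc (D_ i) E = 0 -> dotc (D_ i.+1) E <= 0.
Proof.
move=> lt_i1m; have [posD DZ qaD] := yau_stage (ltnW lt_i1m).
exact: (tyurina_dotc_nonpos Msym Moff Mneg Mconn adj_ge HZ posD DZ qaD
         (yau_step lt_i1m).2).
Qed.

Lemma yau_antinef i E : (i < m)%N -> comp_le E (D_ i) -> dotc (D_ i) E <= 0.
Proof.
case: i => [_ _|i lt_im Ei]; first by rewrite yau_head (fundamental_antinef HZ).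
apply: yau_tyurina_nonpos => //; rewrite -ip_Ecomp.
by have [_ [[_ _ Dtriv _] _]] := yau_step lt_im; apply: Dtriv.
Qed.

Lemma yau_dotc_le1 i E : (i < m)%N -> D_ i E = 0 -> dotc (D_ i) E <= 1.
Proof.
move=> lt_im DE0; have [posD DZ qaD] := yau_stage lt_im.
have ZE := fundamental_ge1 HZ.
have EA : E != A.
  by apply/eqP=> EA; move: DE0; rewrite EA (yau_coefA lt_im).1; have := ZE A; lia.
have [EE kE] := minus2_off EA.
apply: (dotc_le1_minus2 Msym Moff Mconn adj_ge HZ posD DZ qaD _ EE kE).
by rewrite DE0; have := ZE E; lia.
Qed.

Lemma Zm_dotc_off_A E : E != A -> comp_le E Zm -> dotc Zm E = 0.
Proof.
move=> EA ZmE; have [EE kE] := minus2_off EA.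
have ZmE_le0 : dotc Zm E <= 0.
  by rewrite -yau_last yau_antinef ?yau_lt_last ?yau_last.
apply/eqP; rewrite eq_le ZmE_le0 /=.
apply: (Zmin_dotc_ge0 Msym Moff Mconn adj_ge HZ HZm EE kE).
have [[Zm_ge0 _] _ _ _] := HZm.
apply: (cpos_subEcomp (i := A)) Zm_ge0 ZmE _ _; first by rewrite eq_sym.
by rewrite /comp_le Zm_coefA (fundamental_ge1 HZ).
Qed.

Lemma ZA_mul_Zm_dotcA : Z A * dotc Zm A = ip M Z Z.
Proof.
have [_] := yau_coefA yau_lt_last; rewrite yau_last => <-.
rewrite ip_dotc (bigD1 A) //= Zm_coefA big1 ?addr0 // => F FA.
have [[Zm_ge0 _] _ _ _] := HZm.
have [->|ZmF] := cle0_supp F Zm_ge0; first by rewrite mul0r.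
by rewrite Zm_dotc_off_A ?mulr0.
Qed.

Definition Ytail j := \sum_(j <= i < m) D_ i.

Lemma yau_cycleE : yau_cycle Ds = Ytail 0.
Proof. by rewrite /yau_cycle (big_nth 0). Qed.

Lemma Ytail_cons j : (j < m)%N -> Ytail j = D_ j + Ytail j.+1.
Proof. exact: big_ltn. Qed.

Lemma ip_Ytail_earlier i j : (i < j)%N -> ip M (Ytail j) (D_ i) = 0.
Proof.
move=> lt_ij; rewrite ip_suml big_nat_cond big1 // => l /andP[/andP[le_jl lt_lm] _].
by apply: yau_orth => //; lia.
Qed.

Lemma Ytail_dotcA j : (j < m)%N -> dotc (Ytail j) A = dotc Zm A.
Proof.
move=> lt_jm; have le_j_last : (j <= m.-1)%N by rewrite -ltnS prednK // yau_nonempty.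
rewrite dotc_sum -(prednK yau_nonempty) big_nat_recr //= yau_last.
rewrite big_nat_cond big1 ?add0r // => i /andP[/andP[_ lt_i] _].
by apply: yau_dotcA; lia.
Qed.

Lemma Ytail_dotc_ge0 j F : D_ j F = 0 -> 0 <= dotc (Ytail j) F.
Proof.
move=> DjF; rewrite dotc_sum big_nat_cond sumr_ge0 // => i /andP[/andP[le_ji _] _].
apply: (dotc_ge0_off_support Moff (yau_ge0 i)).
by have := yau_le le_ji F; have := cle0_ge0 (yau_ge0 i) F; lia.
Qed.

Definition tail_trivial j :=
  forall E, E != A -> comp_le E (D_ j) -> dotc (Ytail j) E = 0.

Lemma tail_trivial_last j : (m <= j.+1)%N -> tail_trivial j.
Proof.
move=> le_mj1 E EA DjE; have [lt_jm|le_mj] := ltnP j m; last first.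
  by move: DjE; rewrite /comp_le nth_default // ffunE.
have j_last : j = m.-1 by lia.
rewrite Ytail_cons // /Ytail big_geq // addr0.
by move: DjE; rewrite j_last yau_last; apply: Zm_dotc_off_A.
Qed.

Lemma Ytail_dotc_dropped j E : (j.+1 < m)%N -> tail_trivial j.+2 ->
  comp_le E (D_ j) -> D_ j.+1 E = 0 -> dotc (Ytail j.+2) E = 0.
Proof.
move=> lt_j1m triv2 DjE Dj1E.
have W_ge0 := cle_subr_ge0 (yau_le (leqnSn j)).
have ipW : ip M (Ytail j.+2) (D_ j - D_ j.+1) = 0.
  by rewrite ipBr !ip_Ytail_earlier ?subrr.
have terms_ge0 F : true -> 0 <= (D_ j - D_ j.+1) F * dotc (Ytail j.+2) F.
  move=> _; have [->|WF] := cle0_supp F W_ge0; first by rewrite mul0r.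
  rewrite pmulr_rge0; last exact: lt_le_trans ltr01 WF.
  have FA : F != A.
    apply: contra_eq_neq WF => ->.
    by rewrite /comp_le !ffunE (yau_coefA (ltnW lt_j1m)).1 (yau_coefA lt_j1m).1 subrr.
  have [D2F|D2F] := cle0_supp F (yau_ge0 j.+2); first exact: Ytail_dotc_ge0.
  by rewrite triv2.
rewrite ip_dotc in ipW.
have /eqP := psumr_eq0P terms_ge0 ipW (i := E) isT.
rewrite mulf_eq0 !ffunE Dj1E subr0 => /orP[/eqP DjE0|/eqP //].
by move: DjE; rewrite /comp_le DjE0.
Qed.

Lemma Ytail_dotc_nonpos j E : (j.+1 < m)%N -> tail_trivial j.+1 -> tail_trivial j.+2 ->
  E != A -> comp_le E (D_ j) -> dotc (Ytail j) E <= 0.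
Proof.
move=> lt_j1m triv1 triv2 EA DjE; rewrite Ytail_cons ?dotcD ?(ltnW lt_j1m) //.
have [_ [[_ _ Dtriv _] _]] := yau_step lt_j1m.
have [Dj1E0|Dj1E] := cle0_supp E (yau_ge0 j.+1); last first.
  by rewrite triv1 // -ip_Ecomp Dtriv ?addr0.
rewrite Ytail_cons // dotcD (Ytail_dotc_dropped lt_j1m triv2 DjE Dj1E0) addr0.
have := yau_antinef (ltnW lt_j1m) DjE; rewrite le_eqVlt => /orP[/eqP DjE0|DjE_neg].
  by rewrite DjE0 add0r yau_tyurina_nonpos.
by have := yau_dotc_le1 lt_j1m Dj1E0; lia.
Qed.

(* [Ytail j . D_j = D_j^2 = Z^2] is already accounted for by the [A]-term, so the
   remaining terms, all of the same sign, vanish. *)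
Lemma tail_trivial_step j : (j.+1 < m)%N -> tail_trivial j.+1 -> tail_trivial j.+2 ->
  tail_trivial j.
Proof.
move=> lt_j1m triv1 triv2 E EA DjE.
have lt_jm := ltnW lt_j1m.
have [DjA DjDj] := yau_coefA lt_jm.
have ipYD : ip M (Ytail j) (D_ j) = ip M Z Z.
  by rewrite Ytail_cons // ipDl ip_Ytail_earlier // addr0.
have sum0 : \sum_(F | F != A) - (D_ j F * dotc (Ytail j) F) = 0.
  move: ipYD; rewrite ip_dotc (bigD1 A) //= DjA Ytail_dotcA // ZA_mul_Zm_dotcA sumrN.
  by rewrite -{2}[ip M Z Z]addr0 => /addrI ->; rewrite oppr0.
have terms_ge0 F : F != A -> 0 <= - (D_ j F * dotc (Ytail j) F).
  move=> FA; rewrite oppr_ge0.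
  have [->|DjF] := cle0_supp F (yau_ge0 j); first by rewrite mul0r.
  by rewrite pmulr_rle0 ?Ytail_dotc_nonpos.
have /eqP := psumr_eq0P terms_ge0 sum0 EA.
rewrite oppr_eq0 mulf_eq0 => /orP[/eqP DjE0|/eqP //].
by move: DjE; rewrite /comp_le DjE0.
Qed.

Lemma tail_trivial_all j : tail_trivial j.
Proof.
have [d] := ubnP (m - j); elim: d j => // d IH j lt_d.
have [lt_j1m|le_mj1] := ltnP j.+1 m; last exact: tail_trivial_last.
by apply: tail_trivial_step => //; apply: IH; lia.
Qed.

Lemma yau_canonical :
  is_canonical_cycle M k
    (fun E => ((2 - 2 * pa M k Z) / (ip M Z Z)%:~R + 1) * (yau_cycle Ds E)%:~R).
Proof.
move=> E; under eq_bigr => F _ do rewrite -mulrA.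
rewrite -mulr_sumr -intr_dotc yau_cycleE.
have [->|EA] := eqVneq E A; last first.
  have [_ ->] := minus2_off EA.
  rewrite tail_trivial_all ?yau_head ?mulr0z ?mulr0 ?oppr0 //.
  exact: fundamental_ge1 HZ E.
rewrite Ytail_dotcA ?yau_nonempty // /pa Kdot_A -ZA_mul_Zm_dotcA.
have [posZ _ _ _] := HZ.
have ZA_neq0 : (Z A)%:~R != 0 :> rat.
  by rewrite intr_eq0; have := fundamental_ge1 HZ A; lia.
have dA_neq0 : (dotc Zm A)%:~R != 0 :> rat.
  rewrite intr_eq0; have := Mneg (cpos_neq0 posZ); rewrite -ZA_mul_Zm_dotcA.
  by apply: contraTneq => ->; rewrite mulr0 ltxx.
rewrite !rmorphD !rmorphM /=.
by field; rewrite ZA_neq0 dA_neq0.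
Qed.

End YauSequence.

Theorem proposition3p6 (n : nat) (M : 'M[int]_n) (k : 'I_n -> int)
  (Z Zm : ecycle n) (Ds : seq (ecycle n)) (A : 'I_n) (ZK : 'I_n -> rat) :
  min_res_data M k ->
  is_fundamental_cycle M Z ->
  0 < pa M k Z ->
  essentially_irreducible M k Z ->
  ~~ minus2 M k A ->
  0 <= k A + ip M Z Z ->
  is_Zmin M k Z Zm ->
  is_yau_sequence M k Z Zm Ds ->
  last 0 Ds = Zm ->
  is_canonical_cycle M k ZK ->
  forall i, ZK i =
    ((2 - 2 * pa M k Z) / (ip M Z Z)%:~R + 1) * ((yau_cycle Ds) i)%:~R.
Proof.
move=> [Msym Moff Mneg Mconn Mk] HZ _ Zess nA kA_Z2 HZm HDs Ds_last canZK.
have adj_ge j : -2 <= k j + M j j by case: (Mk j).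
have k_ge0 j : 0 <= k j by case: (Mk j).
have minus2_off j : j != A -> M j j = -2 /\ k j = 0.
  have Z_neq0 : forall i, Z i != 0 by case: HZ.
  by move/(ess_irr_minus2 Zess Z_neq0 nA)/andP=> [/eqP-> /eqP->].
apply: (canonical_cycle_unique Mneg canZK).
exact: yau_canonical Msym Moff Mneg Mconn adj_ge k_ge0 HZ minus2_off kA_Z2 HZm HDs
  Ds_last.
Qed.
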